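(* Let $R$ be a discrete valuation domain with maximal ideal $P=Rp$. Then, up to isomorphism, the indecomposable pseudo-absorbing primary multiplication $R$-modules are exactly: (1) $R$; (2) $R/P^n$ for $n\geq1$.
   Context: A proper ideal $I$ of a commutative ring $A$ is 2-absorbing primary if whenever $a,b,c\in A$ and $abc\in I$ then $ab\in I$ or $ac\in\sqrt I$ or $bc\in\sqrt I$. A proper submodule $N$ of an $A$-module $M$ is pseudo-absorbing primary if $(N:_AM)=\{r\in A:rM\subseteq N\}$ is a 2-absorbing primary ideal of $A$. $M$ is a pseudo-absorbing primary multiplication module if for every pseudo-absorbing primary submodule $N$ of $M$ there is an ideal $I$ of $A$ with $N=IM$. *)

From HB Require Import structures.
From mathcomp Require Import all_boot all_order all_algebra.
Set Implicit Arguments. Unset Strict Implicit. Unset Printing Implicit Defensive.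
Import GRing.Theory.
Local Open Scope ring_scope.

Definition is_ideal (R : comNzRingType) (I : R -> Prop) : Prop :=
  [/\ I 0, (forall x y, I x -> I y -> I (x + y)) & (forall r x, I x -> I (r * x))].

Definition proper_ideal (R : comNzRingType) (I : R -> Prop) : Prop :=
  is_ideal I /\ ~ I 1.

Definition principal (R : comNzRingType) (g : R) : R -> Prop :=
  fun x => exists r, x = r * g.

Definition maximal_ideal (R : comNzRingType) (I : R -> Prop) : Prop :=
  proper_ideal I /\
  forall J, is_ideal J -> (forall x, I x -> J x) ->
    (forall x, J x <-> I x) \/ (forall x, J x).

(* R is a discrete valuation domain with maximal ideal P = Rp:
   a principal ideal domain, not a field, whose unique maximal ideal is Rp. *)
Definition DVD_with_uniformizer (R : idomainType) (p : R) : Prop :=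
  [/\ p != 0,
      (forall I : R -> Prop, is_ideal I -> exists g, forall x, I x <-> principal g x),
      maximal_ideal (principal p) &
      (forall I, maximal_ideal I -> forall x, I x <-> principal p x)].

Definition rad (R : comNzRingType) (I : R -> Prop) : R -> Prop :=
  fun x => exists n : nat, I (x ^+ n).

Definition two_absorbing_primary (R : comNzRingType) (I : R -> Prop) : Prop :=
  proper_ideal I /\
  forall a b c, I (a * b * c) -> I (a * b) \/ rad I (a * c) \/ rad I (b * c).

Definition is_submodule (R : comNzRingType) (M : lmodType R) (N : M -> Prop) : Prop :=
  [/\ N 0, (forall x y, N x -> N y -> N (x + y)) & (forall r x, N x -> N (r *: x))].

Definition proper_submodule (R : comNzRingType) (M : lmodType R) (N : M -> Prop) : Prop :=
  is_submodule N /\ exists m, ~ N m.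

Definition colon (R : comNzRingType) (M : lmodType R) (N : M -> Prop) : R -> Prop :=
  fun r => forall m : M, N (r *: m).

Definition pseudo_absorbing_primary (R : comNzRingType) (M : lmodType R)
  (N : M -> Prop) : Prop :=
  proper_submodule N /\ two_absorbing_primary (colon N).

Definition ideal_mul_module (R : comNzRingType) (M : lmodType R) (I : R -> Prop) : M -> Prop :=
  fun m => exists s : seq (R * M),
    (forall x, x \in s -> I x.1) /\ m = \sum_(x <- s) x.1 *: x.2.

Definition pap_multiplication_module (R : comNzRingType) (M : lmodType R) : Prop :=
  forall N : M -> Prop, pseudo_absorbing_primary N ->
    exists I : R -> Prop, is_ideal I /\ forall m, N m <-> ideal_mul_module I m.

Definition indecomposable (R : comNzRingType) (M : lmodType R) : Prop :=
  (exists m : M, m != 0) /\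
  forall N1 N2 : M -> Prop, is_submodule N1 -> is_submodule N2 ->
    (forall m, exists a b, [/\ N1 a, N2 b & m = a + b]) ->
    (forall m, N1 m -> N2 m -> m = 0) ->
    (forall m, N1 m -> m = 0) \/ (forall m, N2 m -> m = 0).

Definition Rlinear (R : comNzRingType) (M : lmodType R) (f : R -> M) : Prop :=
  forall a x y, f (a * x + y) = a *: f x + f y.

Definition iso_to_R (R : comNzRingType) (M : lmodType R) : Prop :=
  exists f : R -> M, Rlinear f /\ bijective f.

(* M is isomorphic to R / I, expressed as: there is a surjective R-linear map
   R -> M with kernel exactly I (first isomorphism theorem). *)
Definition iso_to_quotient (R : comNzRingType) (M : lmodType R) (I : R -> Prop) : Prop :=
  exists f : R -> M, [/\ Rlinear f, (forall m, exists x, f x = m) &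
                         (forall x, f x = 0 <-> I x)].

From Pilot Require Import Defs.
From mathcomp Require Import all_boot all_order all_algebra.
From mathcomp Require Import ring.
From Stdlib Require Import Classical ClassicalEpsilon.
(* all_algebra has its own [proper_ideal] and [rad]; ours must take precedence. *)
Import Pilot.Defs.
Set Implicit Arguments. Unset Strict Implicit. Unset Printing Implicit Defensive.
Import GRing.Theory.
Local Open Scope ring_scope.

(** A discrete valuation ring is local (ascending chains of principal ideals
    stabilise, so every nonunit lies in a maximal ideal, which must be Rp), and
    every nonzero element is a unit times a power of p.  Hence the ideals are 0
    and the Rp^k, they are totally ordered, and every proper one is 2-absorbing
    primary: a pseudo-absorbing primary multiplication module is just a
    multiplication module, each submodule being gM for a single g.  A nonzero
    such module is cyclic, generated by any element outside pM; if there were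
    none, M = p^k M = Rm for every nonzero m, and m = prm kills m since 1 - pr
    is a unit.  A cyclic module is R/ann, with ann = 0 or Rp^n.  Conversely
    cyclic modules are multiplication modules, and indecomposable because their
    submodules are totally ordered. *)

Section Principal.
Variable R : comNzRingType.
Implicit Types (I : R -> Prop) (g r x y : R).

Lemma ideal0 I : is_ideal I -> I 0.
Proof. by case. Qed.

Lemma idealD I x y : is_ideal I -> I x -> I y -> I (x + y).
Proof. by case=> _ + _; apply. Qed.

Lemma idealM I x : is_ideal I -> I x -> forall r, I (r * x).
Proof. by case=> _ _ Imul Ix r; apply: Imul. Qed.

Lemma principal_refl g : principal g g.
Proof. by exists 1; rewrite mul1r. Qed.

Lemma principal_trans g x y : principal g x -> principal x y -> principal g y.
Proof. by move=> [r ->] [s ->]; exists (s * r); rewrite mulrA. Qed.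

Lemma principal_ideal g : is_ideal (principal g).
Proof.
split; first by exists 0; rewrite mul0r.
- by move=> x y [a ->] [b ->]; exists (a + b); rewrite mulrDl.
- by move=> r x [a ->]; exists (r * a); rewrite mulrA.
Qed.

Lemma principal_sub I g x : is_ideal I -> I g -> principal g x -> I x.
Proof. by move=> Iid Ig [r ->]; apply: idealM. Qed.

End Principal.

Section PrincipalUnit.
Variable R : comUnitRingType.
Implicit Types (g u x : R).

Lemma unit_of_principal1 g : principal g 1 -> g \is a GRing.unit.
Proof. by case=> r r1; apply/unitrPr; exists r; rewrite mulrC -r1. Qed.

Lemma principal_unit u x : u \is a GRing.unit -> principal u x.
Proof. by move=> uU; exists (x * u^-1); rewrite -mulrA mulVr // mulr1. Qed.

Lemma principal_unitM u g x :
  u \is a GRing.unit -> principal (u * g) x <-> principal g x.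
Proof.
move=> uU; split=> -[r ->]; first by exists (r * u); rewrite mulrA.
by exists (r * u^-1); rewrite mulrA -(mulrA r) mulVr // mulr1.
Qed.

End PrincipalUnit.

Section PrincipalIdealRing.
Variable R : comUnitRingType.
Hypothesis ideal_principal :
  forall I : R -> Prop, is_ideal I -> exists g, forall x, I x <-> principal g x.

Lemma principal_chain_stationary (d : nat -> R) :
  (forall n, principal (d n.+1) (d n)) -> exists N, principal (d N) (d N.+1).
Proof.
move=> chain.
have mono n k : principal (d (n + k)%N) (d n).
  elim: k => [|k IH]; first by rewrite addn0; apply: principal_refl.
  by rewrite addnS; apply: principal_trans (chain _) IH.
pose U x := exists n, principal (d n) x.
have U_ideal : is_ideal U.
  split; first by exists 0%N; exists 0; rewrite mul0r.
  - move=> x y [m dx] [n dy]; exists (m + n)%N.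
    apply: idealD (principal_ideal _) _ _; first exact: principal_trans (mono m n) dx.
    by rewrite addnC; apply: principal_trans (mono n m) dy.
  - by move=> r x [n dx]; exists n; exact: idealM (principal_ideal (d n)) dx r.
have [g Ug] := ideal_principal U_ideal.
have [N dg] : U g by apply/Ug/principal_refl.
by exists N; apply: principal_trans dg _; apply/Ug; exists N.+1; apply: principal_refl.
Qed.

Lemma not_maximal_principal (d : R) :
  d \isn't a GRing.unit -> ~ maximal_ideal (principal d) ->
  exists e, [/\ e \isn't a GRing.unit, principal e d & ~ principal d e].
Proof.
move=> dNU dNmax; apply: NNPP => no_e; apply: dNmax.
split; first by split; [apply: principal_ideal | move/unit_of_principal1; apply/negP].
move=> J J_ideal dJ; have [e Je] := ideal_principal J_ideal.
case: (classic (principal d e)) => [de | dNe].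
  by left=> y; split=> [/Je ey | /dJ //]; apply: principal_trans de ey.
right=> y; apply/Je/principal_unit; apply: contraNT dNU => eNU.
by case: no_e; exists e; split=> //; apply/Je/dJ/principal_refl.
Qed.

Lemma maximal_ideal_over (x : R) :
  x \isn't a GRing.unit -> exists I, maximal_ideal I /\ I x.
Proof.
move=> xNU; apply: NNPP => no_max.
pose below d := d \isn't a GRing.unit /\ principal d x.
have step d : exists e, below d -> [/\ below e, principal e d & ~ principal d e].
  case: (classic (below d)) => [[dNU dx] | dNbelow]; last by exists d.
  have [|e [eNU ed dNe]] := not_maximal_principal dNU.
    by move=> dmax; apply: no_max; exists (principal d).
  by exists e => _; split=> //; split=> //; apply: principal_trans ed dx.
have [next nextP] := choice _ step.
pose d n := iter n next x.
have below_d n : below (d n).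
  by elim: n => [|n IH]; [split=> //; apply: principal_refl | case: (nextP _ IH)].
have chain n : principal (d n.+1) (d n) by case: (nextP _ (below_d n)).
have [N] := principal_chain_stationary chain.
by case: (nextP _ (below_d N)).
Qed.

End PrincipalIdealRing.

Section DiscreteValuationRing.
Variables (R : idomainType) (p : R).
Hypothesis dvr : DVD_with_uniformizer p.

Lemma dvr_ideal_principal (I : R -> Prop) :
  is_ideal I -> exists g, forall x, I x <-> principal g x.
Proof. by case: dvr => _ + _ _; apply. Qed.

Lemma uniformizer_neq0 : p != 0.
Proof. by case: dvr. Qed.

Lemma uniformizer_ndvd1 : ~ principal p 1.
Proof. by case: dvr => _ _ [[_ ?] _] _. Qed.

Lemma unit_of_ndvd_uniformizer (x : R) : ~ principal p x -> x \is a GRing.unit.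
Proof.
move=> pNx; apply: contraT => xNU.
have [I [Imax Ix]] := maximal_ideal_over dvr_ideal_principal xNU.
by case: dvr => _ _ _ max_uniq; case: pNx; apply/(max_uniq _ Imax).
Qed.

Lemma unit_1_sub_uniformizerM (r : R) : (1 - p * r) \is a GRing.unit.
Proof.
apply: unit_of_ndvd_uniformizer => -[s rs]; apply: uniformizer_ndvd1.
by exists (s + r); rewrite mulrDl -rs; ring.
Qed.

Lemma uniformizer_pow_ndvd1 n : (0 < n)%N -> ~ principal (p ^+ n) 1.
Proof.
case: n => // n _ [r r1]; apply: uniformizer_ndvd1.
by exists (r * p ^+ n); rewrite r1 exprSr mulrA.
Qed.

(* Krull intersection: y = a_n p^n for all n would make (a_n) a strictly
   ascending chain of principal ideals. *)
Lemma not_dvd_all_pow (y : R) : y != 0 -> ~ (forall n, principal (p ^+ n) y).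
Proof.
move=> y0 /choice [a ya].
have a_step n : a n = p * a n.+1.
  apply: (mulIf (expf_neq0 n uniformizer_neq0)) => /=.
  by rewrite -(ya n) (ya n.+1) exprSr; ring.
have a_neq0 n : a n != 0 by apply: contraNneq y0 => an0; rewrite (ya n) an0 mul0r.
have [N [r aN]] := principal_chain_stationary dvr_ideal_principal
  (fun n => ex_intro _ p (a_step n)).
have : 1 * a N.+1 = (r * p) * a N.+1 by rewrite mul1r {1}aN (a_step N) mulrA.
by move/(mulIf (a_neq0 _)) => r1; case: uniformizer_ndvd1; exists r.
Qed.

Lemma unit_pow_decomposition (y : R) :
  y != 0 -> exists k u, u \is a GRing.unit /\ y = u * p ^+ k.
Proof.
move=> y0.
have [k [[u yu] pNy]] : exists k, principal (p ^+ k) y /\ ~ principal (p ^+ k.+1) y.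
  apply: NNPP => no_k; apply: (not_dvd_all_pow y0); elim=> [|n IH].
    by exists y; rewrite expr0 mulr1.
  by apply: NNPP => pNy; apply: no_k; exists n.
exists k, u; split=> //; apply: unit_of_ndvd_uniformizer => -[r ur]; apply: pNy.
by exists r; rewrite yu ur exprS mulrA.
Qed.

Lemma principal_eq_pow (y : R) :
  y != 0 -> exists k, forall x, principal y x <-> principal (p ^+ k) x.
Proof.
by move=> /unit_pow_decomposition [k [u [uU ->]]]; exists k => x; apply: principal_unitM.
Qed.

Lemma dvd_total (a b : R) : principal a b \/ principal b a.
Proof.
have [->|a0] := eqVneq a 0; first by right; exists 0; rewrite mul0r.
have [->|b0] := eqVneq b 0; first by left; exists 0; rewrite mul0r.
suff pow_le c d m n : (forall x, principal c x <-> principal (p ^+ m) x) ->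
    (forall x, principal d x <-> principal (p ^+ n) x) -> (m <= n)%N -> principal c d.
  have [i ai] := principal_eq_pow a0; have [j bj] := principal_eq_pow b0.
  by case: (leqP i j) => [/(pow_le _ _ _ _ ai bj) | /ltnW/(pow_le _ _ _ _ bj ai)]; auto.
move=> cm dn mn; apply/cm; apply: principal_trans (proj1 (dn d) (principal_refl d)).
by exists (p ^+ (n - m)); rewrite -exprD subnK.
Qed.

Lemma rad_of_dvd_uniformizer (I : R -> Prop) g x :
  is_ideal I -> I g -> g != 0 -> principal p x -> rad I x.
Proof.
move=> Iid Ig g0 [r ->]; have [k gk] := principal_eq_pow g0.
exists k; rewrite exprMn; apply: (idealM Iid).
by apply: (principal_sub Iid Ig); apply/gk/principal_refl.
Qed.

Lemma two_absorbing_primary_proper (I : R -> Prop) :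
  proper_ideal I -> two_absorbing_primary I.
Proof.
move=> [Iid I1]; split=> // a b c Iabc.
have [cU|cNU] := boolP (c \is a GRing.unit).
  have -> : a * b = c^-1 * (a * b * c) by rewrite [RHS]mulrC mulrK.
  by left; apply: idealM.
have pc : principal p c.
  by apply: NNPP => /unit_of_ndvd_uniformizer cU; rewrite cU in cNU.
case: (classic (exists g, I g /\ g != 0)) => [[g [Ig g0]] | I_zero].
  right; left; apply: (rad_of_dvd_uniformizer Iid Ig g0).
  exact: (idealM (principal_ideal p) pc a).
have I0 x : I x -> x = 0.
  by move=> Ix; apply: NNPP => x0; apply: I_zero; exists x; split=> //; apply/eqP.
move/I0/eqP: Iabc; rewrite mulf_eq0 => /orP[/eqP ab0 | /eqP c0].
  by left; rewrite ab0; apply: ideal0.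
by right; left; exists 1%N; rewrite expr1 c0 mulr0; apply: ideal0.
Qed.

End DiscreteValuationRing.

Definition generator (R : comNzRingType) (M : lmodType R) (m0 : M) : Prop :=
  forall m : M, exists r : R, m = r *: m0.

Section Module.
Variables (R : comNzRingType) (M : lmodType R).
Implicit Types (N : M -> Prop) (I : R -> Prop).

Lemma submodule0 N : is_submodule N -> N 0.
Proof. by case. Qed.

Lemma submoduleD N x y : is_submodule N -> N x -> N y -> N (x + y).
Proof. by case=> _ + _; apply. Qed.

Lemma submoduleZ N r x : is_submodule N -> N x -> N (r *: x).
Proof. by case=> _ _; apply. Qed.

Lemma cyclic_submodule (m0 : M) : is_submodule (fun y => exists r, y = r *: m0).
Proof.
split; first by exists 0; rewrite scale0r.
- by move=> x y [a ->] [b ->]; exists (a + b); rewrite scalerDl.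
- by move=> r x [a ->]; exists (r * a); rewrite scalerA.
Qed.

Lemma colon_ideal N : is_submodule N -> is_ideal (colon N).
Proof.
move=> Nsub; split.
- by move=> m; rewrite scale0r; apply: submodule0.
- by move=> x y Nx Ny m; rewrite scalerDl; apply: submoduleD.
- by move=> r x Nx m; rewrite -scalerA; apply: submoduleZ.
Qed.

Lemma preimage_ideal N (m0 : M) : is_submodule N -> is_ideal (fun r => N (r *: m0)).
Proof.
move=> Nsub; split; first by rewrite scale0r; apply: submodule0.
- by move=> x y Nx Ny; rewrite scalerDl; apply: submoduleD.
- by move=> r x Nx; rewrite -scalerA; apply: submoduleZ.
Qed.

Lemma annihilator_ideal (m0 : M) : is_ideal (fun r : R => r *: m0 = 0).
Proof.
split; first by rewrite scale0r.
- by move=> x y x0 y0; rewrite scalerDl x0 y0 addr0.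
- by move=> r x x0; rewrite -scalerA x0 scaler0.
Qed.

Lemma ideal_mul_module_principal I g :
  (forall x, I x <-> principal g x) ->
  forall m : M, ideal_mul_module I m <-> exists x, m = g *: x.
Proof.
move=> Ig m; split.
  move=> [s [sI ->]]; elim: s sI => [|y s IH] sI; first by exists 0; rewrite big_nil scaler0.
  rewrite big_cons; have [z ->] : exists z, \sum_(x <- s) x.1 *: x.2 = g *: z.
    by apply: IH => z zs; apply: sI; rewrite inE zs orbT.
  have [r ->] : principal g y.1 by apply/Ig/sI; rewrite inE eqxx.
  by exists (r *: y.2 + z); rewrite scalerDr scalerA mulrC.
move=> [x ->]; exists [:: (g, x)]; split; last by rewrite big_seq1.
by move=> y; rewrite inE => /eqP -> /=; apply/Ig/principal_refl.
Qed.

Lemma Rlinear_scale (f : R -> M) : Rlinear f -> forall x, f x = x *: f 1.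
Proof.
move=> f_lin x; have f0 : f 0 = 0.
  by have := f_lin (- 1) 0 0; rewrite mulr0 addr0 scaleNr scale1r addNr.
by have := f_lin x 1 0; rewrite mulr1 addr0 f0 addr0.
Qed.

Lemma generator_of_surjective (f : R -> M) :
  Rlinear f -> (forall m, exists x, f x = m) -> generator (f 1).
Proof. by move=> f_lin f_onto m; have [x <-] := f_onto m; exists x; apply: Rlinear_scale. Qed.

Variable m0 : M.
Hypothesis m0_gen : generator m0.

Lemma submodule_eq_ideal_mul N :
  is_submodule N -> forall m, N m <-> ideal_mul_module (fun r => N (r *: m0)) m.
Proof.
move=> Nsub m; split=> [Nm | [s [sN ->]]].
  have [r mr] := m0_gen m; exists [:: (r, m0)]; split; last by rewrite big_seq1.
  by move=> x; rewrite inE => /eqP -> /=; rewrite -mr.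
elim: s sN => [|y s IH] sN; first by rewrite big_nil; apply: submodule0.
rewrite big_cons; apply: submoduleD => //.
  have [r ->] := m0_gen y.2; rewrite scalerA mulrC -scalerA; apply: submoduleZ => //.
  by apply: sN; rewrite inE eqxx.
by apply: IH => x xs; apply: sN; rewrite inE xs orbT.
Qed.

Lemma pap_multiplication_of_generator : pap_multiplication_module M.
Proof.
move=> N [[Nsub _] _]; exists (fun r => N (r *: m0)).
by split; [apply: preimage_ideal | apply: submodule_eq_ideal_mul].
Qed.

Lemma indecomposable_of_generator :
  (forall a b : R, principal a b \/ principal b a) -> m0 != 0 -> indecomposable M.
Proof.
move=> total m0_neq0; split; first by exists m0.
move=> N1 N2 N1sub N2sub _ N12_0.
case: (classic (forall m, N1 m -> m = 0)) => [N1_0 | N1_nz]; [by left | right].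
move=> m2 N2m2; apply: NNPP => m2_neq0; apply: N1_nz => m1 N1m1.
have [x m1x] := m0_gen m1; have [y m2y] := m0_gen m2.
case: (total x y) => [[r yr] | [r xr]].
  case: m2_neq0; apply: N12_0 => //.
  by rewrite m2y yr -scalerA -m1x; apply: submoduleZ.
by apply: N12_0 => //; rewrite m1x xr -scalerA -m2y; apply: submoduleZ.
Qed.

Lemma iso_to_quotient_of_generator I :
  (forall r, r *: m0 = 0 <-> I r) -> iso_to_quotient M I.
Proof.
by move=> ann; exists (fun r => r *: m0); split=> // [a x y | m];
  [rewrite scalerDl scalerA | have [r ->] := m0_gen m; exists r].
Qed.

Lemma iso_to_R_of_generator : (forall r, r *: m0 = 0 -> r = 0) -> iso_to_R M.
Proof.
move=> faithful; pose f r := r *: m0.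
have f_inj : injective f.
  move=> a b fab; apply/eqP; rewrite -subr_eq0; apply/eqP/faithful.
  by rewrite scalerBl -/(f a) fab subrr.
have [g fg] := choice _ m0_gen.
exists f; split; first by move=> a x y; rewrite /f scalerDl scalerA.
by exists g => [x | m]; [apply: f_inj; rewrite /f -fg | rewrite /f -fg].
Qed.

End Module.

Section DiscreteValuationModule.
Variables (R : idomainType) (p : R) (M : lmodType R).
Hypothesis dvr : DVD_with_uniformizer p.
Hypothesis M_mult : pap_multiplication_module M.

Lemma submodule_eq_scale (N : M -> Prop) :
  is_submodule N -> exists g, forall m, N m <-> exists x, m = g *: x.
Proof.
move=> Nsub; case: (classic (forall m, N m)) => [N_all | /not_all_ex_not [m0 Nm0]].
  by exists 1 => m; split=> // _; exists m; rewrite scale1r.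
have N_pap : pseudo_absorbing_primary N.
  split; first by split=> //; exists m0.
  apply: (two_absorbing_primary_proper dvr); split; first exact: colon_ideal.
  by move/(_ m0); rewrite scale1r.
have [I [Iid NI]] := M_mult N_pap; have [g Ig] := dvr_ideal_principal dvr Iid.
by exists g => m; rewrite NI; apply: ideal_mul_module_principal.
Qed.

Lemma generator_of_ndvd_uniformizer (m0 : M) : ~ (exists x, m0 = p *: x) -> generator m0.
Proof.
move=> m0_npM; have [g Ng] := submodule_eq_scale (cyclic_submodule m0).
have [x m0x] : exists x, m0 = g *: x by apply/Ng; exists 1; rewrite scale1r.
have gU : g \is a GRing.unit.
  apply: (unit_of_ndvd_uniformizer dvr) => -[r gr]; apply: m0_npM.
  by exists (r *: x); rewrite m0x gr scalerA mulrC.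
by move=> m; apply/Ng; exists (g^-1 *: m); rewrite scalerA mulrV // scale1r.
Qed.

Lemma divisible_trivial : (forall y : M, exists x, y = p *: x) -> forall m : M, m = 0.
Proof.
move=> pM m; have [// | m_neq0] := eqVneq m 0.
have pkM k (y : M) : exists x, y = p ^+ k *: x.
  elim: k y => [|k IH] y; first by exists y; rewrite expr0 scale1r.
  by have [z ->] := pM y; have [w ->] := IH z; exists w; rewrite scalerA exprS.
have [g Ng] := submodule_eq_scale (cyclic_submodule m).
have [x mx] : exists x, m = g *: x by apply/Ng; exists 1; rewrite scale1r.
have g_neq0 : g != 0 by apply: contraNneq m_neq0 => g0; rewrite mx g0 scale0r.
have [k gk] := principal_eq_pow dvr g_neq0.
have m_gen y : exists r, y = r *: m.
  apply/Ng; have [z ->] := pkM k y.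
  have [s ->] : principal g (p ^+ k) by apply/gk/principal_refl.
  by exists (s *: z); rewrite scalerA mulrC.
have [z mz] := pM m; have [r zr] := m_gen z.
have ann : (1 - p * r) *: m = 0 by rewrite scalerBl scale1r -scalerA -zr -mz subrr.
by rewrite -[m]scale1r -(mulVr (unit_1_sub_uniformizerM dvr r)) -scalerA ann scaler0.
Qed.

Lemma pap_multiplication_cyclic (m1 : M) :
  m1 != 0 -> exists m0 : M, m0 != 0 /\ generator m0.
Proof.
move=> m1_neq0.
case: (classic (exists m0 : M, ~ exists x, m0 = p *: x)) => [[m0 m0_npM] | no_m0].
  exists m0; split; last exact: generator_of_ndvd_uniformizer.
  by apply/eqP => m00; apply: m0_npM; exists 0; rewrite m00 scaler0.
move/eqP: m1_neq0; case; apply: divisible_trivial => y.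
by apply: NNPP => y_npM; apply: no_m0; exists y.
Qed.

End DiscreteValuationModule.

Section CyclicModule.
Variables (R : idomainType) (p : R) (M : lmodType R) (m0 : M).
Hypotheses (dvr : DVD_with_uniformizer p) (m0_gen : generator m0) (m0_neq0 : m0 != 0).

Lemma generator_classification :
  iso_to_R M \/ exists n, (1 <= n)%N /\ iso_to_quotient M (principal (p ^+ n)).
Proof.
have [g annG] := dvr_ideal_principal dvr (annihilator_ideal m0).
have [g0 | g_neq0] := eqVneq g 0.
  by left; apply: iso_to_R_of_generator m0_gen _ => r /annG [s ->]; rewrite g0 mulr0.
have [n gn] := principal_eq_pow dvr g_neq0.
right; exists n; split.
  rewrite lt0n; apply/eqP => n0; move/eqP: m0_neq0; apply.
  by rewrite -[m0]scale1r; apply/annG/gn; rewrite n0 expr0; apply: principal_refl.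
apply: (iso_to_quotient_of_generator m0_gen) => r.
by split=> [/annG/gn | /gn/annG].
Qed.

Lemma indecomposable_pap_multiplication_of_generator :
  indecomposable M /\ pap_multiplication_module M.
Proof.
split; first exact: indecomposable_of_generator m0_gen (dvd_total dvr) m0_neq0.
exact: pap_multiplication_of_generator m0_gen.
Qed.

End CyclicModule.

Theorem theorem2p6 (R : idomainType) (p : R) (hR : DVD_with_uniformizer p)
  (M : lmodType R) :
  (indecomposable M /\ pap_multiplication_module M) <->
  (iso_to_R M \/
   exists n : nat, (1 <= n)%N /\ iso_to_quotient M (principal (p ^+ n))).
Proof.
split=> [[[[m1 m1_neq0] _] M_mult] | ].
  have [m0 [m0_neq0 m0_gen]] := pap_multiplication_cyclic hR M_mult m1_neq0.
  exact: generator_classification hR m0_gen m0_neq0.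
case=> [[f [f_lin [g fK gK]]] | [n [n_gt0 [f [f_lin f_onto f_ker]]]]].
  apply: (indecomposable_pap_multiplication_of_generator hR
    (generator_of_surjective f_lin (fun m => ex_intro _ (g m) (gK m)))).
  apply/eqP => f1_0; move/eqP: (oner_neq0 R); apply; apply: (can_inj fK).
  by rewrite f1_0 (Rlinear_scale f_lin 0) scale0r.
apply: (indecomposable_pap_multiplication_of_generator hR (generator_of_surjective f_lin f_onto)).
by apply/eqP => /f_ker; exact: (uniformizer_pow_ndvd1 hR n_gt0).
Qed.
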